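(* For every $n>1$ the complete graph $K_n$ admits no extended irregular dominating set, and for all positive integers $m,n$ the complete bipartite graph $K_{m,n}$ admits no extended irregular dominating set.
   Context: Let $\Gamma=(V,E)$ be a finite simple undirected graph with graph distance $d$. A vertex $v$ carrying a non-negative integer label $\ell$ dominates (covers) exactly the vertices $u$ with $d(u,v)=\ell$; a vertex labeled $0$ dominates only itself. An extended irregular dominating set is a set $S\subseteq V$ together with a labeling $\lambda:S\to\mathbb{Z}_{\ge 0}$ with distinct labels on distinct vertices, such that every vertex of $V$ is dominated by at least one vertex of $S$; it is assumed that some vertex of $S$ has label $0$. *)

From mathcomp Require Import all_boot.
Set Implicit Arguments. Unset Strict Implicit. Unset Printing Implicit Defensive.

(* A finite simple graph is a symmetric irreflexive relation [e] on a finType. *)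

Definition walk (T : finType) (e : rel T) (u v : T) (k : nat) : Prop :=
  exists p : seq T, [/\ path e u p, last u p = v & size p = k].

Definition gdist_is (T : finType) (e : rel T) (u v : T) (l : nat) : Prop :=
  walk e u v l /\ forall k, k < l -> ~ walk e u v k.

(* Extended irregular dominating set: S with labeling lam (only values on S
   matter), distinct labels on S, some vertex of S labeled 0, and every
   vertex u is dominated by some v in S, i.e. d(u,v) = lam v. *)
Definition ext_irr_dom (T : finType) (e : rel T) (S : {set T}) (lam : T -> nat)
  : Prop :=
  [/\ {in S &, injective lam},
      (exists2 v, v \in S & lam v = 0) &
      forall u : T, exists2 v, v \in S & gdist_is e u v (lam v)].

Definition admits_eids (T : finType) (e : rel T) : Prop :=
  exists (S : {set T}) (lam : T -> nat), ext_irr_dom e S lam.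

Definition complete_rel (n : nat) : rel 'I_n := fun i j => i != j.

Definition cbip_rel (m n : nat) : rel ('I_m + 'I_n)%type :=
  fun x y => match x, y with
             | inl _, inr _ => true
             | inr _, inl _ => true
             | _, _ => false
             end.

Arguments complete_rel n : clear implicits.
Arguments cbip_rel m n : clear implicits.

From mathcomp Require Import all_boot zify.
Set Implicit Arguments. Unset Strict Implicit. Unset Printing Implicit Defensive.

(* Both graphs have at least two vertices, symmetric adjacency and diameter
   at most 2.  In such a graph a vertex of S with a nonzero label is dominated
   by another vertex of S whose label lies in {1, 2} and differs from its own.
   Following dominators three times from a nonzero label therefore produces
   y1 -> y2 -> y1 with lam y2 <> lam y1; but then d(y1, y2) = lam y2 and
   d(y2, y1) = lam y1, contradicting the symmetry of the distance. *)

Section Distance.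

Variables (T : finType) (e : rel T).

Lemma walk0 (u v : T) : walk e u v 0 -> u = v.
Proof. by case=> [[|x p]] [] //= _ ->. Qed.

Lemma walk_refl (u : T) : walk e u u 0.
Proof. by exists [::]. Qed.

Lemma walk1 (u v : T) : e u v -> walk e u v 1.
Proof. by move=> euv; exists [:: v]; rewrite /= euv. Qed.

Lemma walk2 (u w v : T) : e u w -> e w v -> walk e u v 2.
Proof. by move=> euw ewv; exists [:: w; v]; rewrite /= euw ewv. Qed.

Lemma walk_sym (u v : T) (k : nat) :
  symmetric e -> walk e u v k -> walk e v u k.
Proof.
move=> esym [p [pth <- <-]]; exists (rev (belast u p)); split.
- by rewrite rev_path (eq_path (e' := e)) // => x y; rewrite esym.
- by case: p {pth} => [|x p] //=; rewrite rev_cons last_rcons.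
- by rewrite size_rev size_belast.
Qed.

Lemma gdist_le_walk (u v : T) (l k : nat) :
  gdist_is e u v l -> walk e u v k -> l <= k.
Proof. by case=> _ short W; rewrite leqNgt; apply/negP => /short. Qed.

Lemma gdist_uniq (u v : T) (l k : nat) :
  gdist_is e u v l -> gdist_is e u v k -> l = k.
Proof.
move=> duv_l duv_k; apply/eqP; rewrite eqn_leq.
by rewrite (gdist_le_walk duv_l duv_k.1) (gdist_le_walk duv_k duv_l.1).
Qed.

Lemma gdist_sym (u v : T) (l : nat) :
  symmetric e -> gdist_is e u v l -> gdist_is e v u l.
Proof.
move=> esym [W short]; split; first exact: walk_sym.
by move=> k lt_kl /(walk_sym esym); apply: short.
Qed.

Lemma gdist0 (u v : T) : gdist_is e u v 0 -> u = v.
Proof. by case=> /walk0. Qed.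

Lemma gdist_self (u : T) (l : nat) : gdist_is e u u l -> l = 0.
Proof.
by move=> duu; apply/eqP; rewrite -leqn0 (gdist_le_walk duu (walk_refl u)).
Qed.

Definition diameter_le (d : nat) : Prop :=
  forall u v : T, exists2 k, k <= d & walk e u v k.

Lemma gdist_le_diameter (d : nat) (u v : T) (l : nat) :
  diameter_le d -> gdist_is e u v l -> l <= d.
Proof.
move=> diam duv; have [k le_kd W] := diam u v.
by apply: leq_trans le_kd; apply: gdist_le_walk W.
Qed.

End Distance.

Section Domination.

Variables (T : finType) (e : rel T) (S : {set T}) (lam : T -> nat).
Hypothesis eids : ext_irr_dom e S lam.

Lemma exists_pos_label : 1 < #|T| -> exists2 x, x \in S & 0 < lam x.
Proof.
case: eids => inj_lam [z zS lam_z] dom /card_gt1P[a [b [_ _ neq_ab]]].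
have [u neq_uz] : exists u, u != z.
  by case: (eqVneq a z) => [eq_az|]; [exists b; rewrite -eq_az eq_sym | exists a].
have [v vS duv] := dom u; exists v => //.
rewrite lt0n; apply: contra neq_uz => /eqP lam_v.
by rewrite lam_v in duv; rewrite (gdist0 duv); apply/eqP/inj_lam; rewrite ?lam_v.
Qed.

Lemma pos_label_dominator (x : T) : x \in S -> 0 < lam x ->
  exists2 y, y \in S & [/\ gdist_is e x y (lam y), 0 < lam y & lam y != lam x].
Proof.
case: eids => inj_lam _ dom xS lam_x_gt0; have [y yS dxy] := dom x.
have neq_xy : x != y.
  apply: contraTneq lam_x_gt0 => eq_xy.
  by rewrite -eq_xy in dxy; rewrite (gdist_self dxy).
exists y => //; split=> //.
- rewrite lt0n; apply: contra neq_xy => /eqP lam_y.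
  by rewrite lam_y in dxy; rewrite (gdist0 dxy).
- by apply: contra neq_xy => /eqP/inj_lam ->.
Qed.

End Domination.

Theorem no_eids_diameter_le2 (T : finType) (e : rel T) :
  symmetric e -> 1 < #|T| -> diameter_le e 2 -> ~ admits_eids e.
Proof.
move=> esym card_gt1 diam [S [lam eids]]; have [inj_lam _ _] := eids.
have [x0 x0S lam_x0] := exists_pos_label eids card_gt1.
have [y1 y1S [d01 lam_y1 _]] := pos_label_dominator eids x0S lam_x0.
have [y2 y2S [d12 lam_y2 neq21]] := pos_label_dominator eids y1S lam_y1.
have [y3 y3S [d23 lam_y3 neq32]] := pos_label_dominator eids y2S lam_y2.
have /(inj_lam _ _ y3S y1S) eq31 : lam y3 = lam y1.
  have := gdist_le_diameter diam d01; have := gdist_le_diameter diam d12.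
  have := gdist_le_diameter diam d23; lia.
rewrite eq31 in d23.
by rewrite (gdist_uniq d12 (gdist_sym esym d23)) eqxx in neq21.
Qed.

Lemma complete_rel_sym (n : nat) : symmetric (complete_rel n).
Proof. by move=> i j; rewrite /complete_rel eq_sym. Qed.

Lemma complete_rel_diameter (n : nat) : diameter_le (complete_rel n) 2.
Proof.
move=> u v; case: (eqVneq u v) => [<-|neq_uv].
- by exists 0; last exact: walk_refl.
- by exists 1; last exact: walk1.
Qed.

Lemma cbip_rel_sym (m n : nat) : symmetric (cbip_rel m n).
Proof. by case=> a [b|b] // [c|c]. Qed.

Lemma cbip_rel_diameter (m n : nat) :
  0 < m -> 0 < n -> diameter_le (cbip_rel m n) 2.
Proof.
move=> m_gt0 n_gt0 [a|a] [b|b]; try by exists 1; last exact: walk1.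
- by exists 2; last exact: (@walk2 _ _ _ (inr (Ordinal n_gt0))).
- by exists 2; last exact: (@walk2 _ _ _ (inl (Ordinal m_gt0))).
Qed.

Theorem corollary2p3 :
  (forall n : nat, 1 < n -> ~ admits_eids (complete_rel n)) /\
  (forall m n : nat, 0 < m -> 0 < n -> ~ admits_eids (cbip_rel m n)).
Proof.
split=> [n n_gt1 | m n m_gt0 n_gt0]; apply: no_eids_diameter_le2.
- exact: complete_rel_sym.
- by rewrite card_ord.
- exact: complete_rel_diameter.
- exact: cbip_rel_sym.
- by rewrite card_sum !card_ord -addn1 leq_add.
- exact: cbip_rel_diameter.
Qed.
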